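(* For every positive integer $r$, the symplectic graph $Sp(2r)$ is not $3$-e.c.
   Context: A graph $G$ with vertex set $V$ is $n$-e.c. ($n$-existentially complete) if for every pair of disjoint subsets $A,B\subseteq V$ with $|A\cup B|=n$ (either of $A$, $B$ may be empty) there is a vertex $z\notin A\cup B$ adjacent to every vertex of $A$ and to no vertex of $B$. Let $\mathbb{F}_2$ be the binary field and $N$ the $2r\times 2r$ block-diagonal matrix over $\mathbb{F}_2$ with $r$ diagonal blocks equal to $\begin{pmatrix}0&1\\1&0\end{pmatrix}$. The symplectic graph $Sp(2r)$ has vertex set $\mathbb{F}_2^{2r}\setminus\{0\}$, with distinct vertices $x,y$ adjacent if and only if $x^T N y=1$. *)

From HB Require Import structures.
From mathcomp Require Import all_boot all_order all_algebra.
Set Implicit Arguments. Unset Strict Implicit. Unset Printing Implicit Defensive.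
Import GRing.Theory.
Local Open Scope ring_scope.

Definition is_nec (T : finType) (adj : rel T) (n : nat) : Prop :=
  forall A B : {set T}, [disjoint A & B] -> #|A :|: B| = n ->
    exists z : T, z \notin A :|: B /\
      (forall a, a \in A -> adj z a) /\ (forall b, b \in B -> ~~ adj z b).

(* The 2r x 2r block-diagonal matrix over F_2 with r blocks [[0,1],[1,0]]:
   entry (i,j) is 1 iff i and j lie in the same 2x2 block and i <> j. *)
Definition sympN (r : nat) : 'M['F_2]_(r.*2) :=
  \matrix_(i, j) (if ((i %/ 2 == j %/ 2)%N && (i != j)) then 1 else 0).

Definition sp_vertex (r : nat) := {v : 'rV['F_2]_(r.*2) | v != 0}.

Definition sp_adj (r : nat) : rel (sp_vertex r) :=
  fun x y => (x != y) && ((val x *m sympN r *m (val y)^T) 0 0 == 1).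

From HB Require Import structures.
From mathcomp Require Import all_boot all_order all_algebra.
Set Implicit Arguments. Unset Strict Implicit. Unset Printing Implicit Defensive.
Import GRing.Theory.
Local Open Scope ring_scope.

(* Take distinct nonzero x, y (possible as 2r >= 2) and the third vertex x + y.
   A common neighbour z of x and y satisfies z N x^T = z N y^T = 1, so over F_2
   bilinearity gives z N (x + y)^T = 0: no vertex is adjacent to all of
   {x, y, x + y}, which violates the 3-e.c. property with B empty. *)

Lemma not_3ec_of_no_common_neighbour (T : finType) (adj : rel T) (a b c : T) :
  a != b -> a != c -> b != c ->
  (forall z, adj z a -> adj z b -> ~~ adj z c) -> ~ is_nec adj 3.
Proof.
move=> ab ac bc noz ec3.
have [||z [_ [adjz _]]] := ec3 [set a; b; c] set0.
- by rewrite -setI_eq0 setI0.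
- by rewrite setU0 setUC !cardsU1 cards1 !inE negb_or ![c == _]eq_sym ab ac bc.
have [ina inb inc] : [/\ a \in [set a; b; c], b \in [set a; b; c] & c \in [set a; b; c]].
  by rewrite !inE !eqxx ?orbT.
by move: (noz z (adjz a ina) (adjz b inb)); rewrite adjz.
Qed.

Lemma addmx_eq0_pchar2 (R : nzRingType) m n (A B : 'M[R]_(m, n)) :
  2%N \in [pchar R] -> (A + B == 0) = (A == B).
Proof.
move=> char2; rewrite addr_eq0; congr (_ == _).
by apply/matrixP => i j; rewrite mxE oppr_pchar2.
Qed.

Lemma exists_distinct_nonzero_rV (R : nzRingType) n : (1 < n)%N ->
  exists u v : 'rV[R]_n, [/\ u != 0, v != 0 & u != v].
Proof.
case: n => [|[|n]] // _.
have e1 (i : 'I_n.+2) : delta_mx 0 i 0 i = 1 :> R by rewrite mxE !eqxx.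
exists (delta_mx 0 0), (delta_mx 0 1); split; apply/eqP => /matrixP.
- by move/(_ 0 0); rewrite e1 mxE; apply/eqP; rewrite oner_eq0.
- by move/(_ 0 1); rewrite e1 mxE; apply/eqP; rewrite oner_eq0.
- by move/(_ 0 0); rewrite e1 mxE; apply/eqP; rewrite oner_eq0.
Qed.

Lemma form_addr_pchar2 (R : nzRingType) m n (M : 'M[R]_(m, n))
    (z : 'rV_m) (x y : 'rV_n) : 2%N \in [pchar R] ->
  (z *m M *m x^T) 0 0 = 1 -> (z *m M *m y^T) 0 0 = 1 ->
  (z *m M *m (x + y)^T) 0 0 = 0.
Proof.
by move=> char2 zx zy; rewrite linearD /= mulmxDr [LHS]mxE zx zy addrr_pchar2.
Qed.

Lemma sp_common_neighbour_nonadj_sum r (x y w : sp_vertex r) : val w = val x + val y ->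
  forall z, sp_adj z x -> sp_adj z y -> ~~ sp_adj z w.
Proof.
rewrite /sp_adj => wE z; rewrite wE => /andP[_ /eqP zx] /andP[_ /eqP zy].
by rewrite form_addr_pchar2 ?pchar_Fp ?andbF.
Qed.

Lemma sp_sum_triple r : (0 < r)%N ->
  exists x y w : sp_vertex r, [/\ x != y, x != w, y != w & val w = val x + val y].
Proof.
move=> r_gt0; have n_gt1 : (1 < r.*2)%N by rewrite (leq_double 1 r).
have [u [v [u0 v0 uv]]] := exists_distinct_nonzero_rV 'F_2 n_gt1.
have uv0 : u + v != 0 by rewrite addmx_eq0_pchar2 ?pchar_Fp.
exists (exist _ u u0), (exist _ v v0), (exist _ (u + v) uv0).
split=> //; rewrite -val_eqE /=.
- by rewrite eq_sym -subr_eq0 addrC addKr.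
- by rewrite eq_sym -subr_eq0 addrK.
Qed.

Theorem mainTheorem1 : forall r : nat, (0 < r)%N -> ~ is_nec (@sp_adj r) 3.
Proof.
move=> r r_gt0; have [x [y [w [xy xw yw wE]]]] := sp_sum_triple r_gt0.
exact: (not_3ec_of_no_common_neighbour xy xw yw (sp_common_neighbour_nonadj_sum wE)).
Qed.
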